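(* Let $\mathcal{M}$ be either $\mathcal{M}^{inj}$ or $\mathcal{M}^{gen}$. A clustering functor $\mathfrak{C}$ on $\mathcal{M}$ is excisive if and only if it is representable.
   Context: $\mathcal{M}^{gen}$ is the category whose objects are finite metric spaces and whose morphisms $f:(X,d_X)\to(Y,d_Y)$ are distance non-increasing maps ($d_Y(f(x),f(x'))\leq d_X(x,x')$ for all $x,x'$); $\mathcal{M}^{inj}$ has the same objects and as morphisms the injective distance non-increasing maps. For a set map $f:X\to Y$ and a partition $P_Y$ of $Y$, $f^*(P_Y)$ is the partition of $X$ whose blocks are the nonempty sets $f^{-1}(B)$, $B$ a block of $P_Y$. A clustering functor on $\mathcal{M}$ is a rule $\mathfrak{C}$ assigning to every finite metric space $(X,d_X)$ a partition $\mathfrak{C}(X,d_X)$ of $X$ such that for every morphism $f:(X,d_X)\to(Y,d_Y)$ in $\mathcal{M}$, $\mathfrak{C}(X,d_X)$ refines $f^*(\mathfrak{C}(Y,d_Y))$. $\mathfrak{C}$ is excisive if for every finite metric space $(X,d_X)$ and every block $B$ of $\mathfrak{C}(X,d_X)$, $\mathfrak{C}(B,d_X|_{B\times B})$ is the partition of $B$ with the single block $B$. For a collection $\Omega$ of finite metric spaces, $\mathfrak{C}^\Omega$ is the clustering functor on $\mathcal{M}$ defined as follows: for a finite metric space $X$, points $x,x'\in X$ lie in the same block of $\mathfrak{C}^\Omega(X)$ iff there exist $z_0,\ldots,z_k\in X$ with $z_0=x$, $z_k=x'$, spaces $\omega_1,\ldots,\omega_k\in\Omega$, points $\alpha_i,\beta_i\in\omega_i$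 and morphisms $f_i\in\mathrm{Mor}_{\mathcal{M}}(\omega_i,X)$ with $f_i(\alpha_i)=z_{i-1}$ and $f_i(\beta_i)=z_i$ for $i=1,\ldots,k$. $\mathfrak{C}$ is representable if $\mathfrak{C}=\mathfrak{C}^\Omega$ (i.e. they give the same partition of every finite metric space) for some collection $\Omega$ of finite metric spaces. *)

From Stdlib Require Import Reals.
From mathcomp Require Import all_boot.

Set Implicit Arguments.
Unset Strict Implicit.
Unset Printing Implicit Defensive.

Record FMS := {
  fms_car :> finType;
  fms_d : fms_car -> fms_car -> R;
  fms_d0 : forall x y, fms_d x y = R0 <-> x = y;
  fms_sym : forall x y, fms_d x y = fms_d y x;
  fms_tri : forall x y z, Rle (fms_d x z) (Rplus (fms_d x y) (fms_d y z))
}.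

Inductive MCat := Minj | Mgen.

Definition is_morphism (M : MCat) (X Y : FMS) (f : X -> Y) : Prop :=
  (forall x x' : X, Rle (fms_d (f x) (f x')) (fms_d x x')) /\
  (M = Minj -> injective f).

Definition clustering_rule := forall X : FMS, {set {set X}}.

Definition pullback (T U : finType) (f : T -> U) (P : {set {set U}}) : {set {set T}} :=
  [set f @^-1: B | B : {set U} in P] :\ set0.

Definition refines (T : finType) (P Q : {set {set T}}) : Prop :=
  forall A, A \in P -> exists2 B, B \in Q & A \subset B.

Definition is_clustering_functor (M : MCat) (C : clustering_rule) : Prop :=
  (forall X : FMS, partition (C X) [set: X]) /\
  (forall (X Y : FMS) (f : X -> Y), is_morphism M f ->
      refines (C X) (pullback f (C Y))).

Definition subFMS (X : FMS) (B : {set X}) : FMS.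
Proof.
refine (@Build_FMS {x : X | x \in B} (fun x y => fms_d (val x) (val y)) _ _ _).
- move=> x y; split => [/fms_d0 /val_inj //|->]; exact/fms_d0.
- move=> x y; exact: fms_sym.
- move=> x y z; exact: fms_tri.
Defined.

Definition excisive (C : clustering_rule) : Prop :=
  forall (X : FMS) (B : {set X}), B \in C X ->
    C (subFMS B) = [set [set: subFMS B]].

Definition omega_step (M : MCat) (Omega : FMS -> Prop) (X : FMS) (z z' : X) : Prop :=
  exists (w : FMS) (a b : w) (f : w -> X),
    Omega w /\ is_morphism M f /\ f a = z /\ f b = z'.

Inductive omega_chain (M : MCat) (Omega : FMS -> Prop) (X : FMS) : X -> X -> Prop :=
  | oc_refl x : omega_chain M Omega x x
  | oc_step x y z : omega_step M Omega x y -> omega_chain M Omega y z ->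
                    omega_chain M Omega x z.

Definition same_block (T : finType) (P : {set {set T}}) (x x' : T) : Prop :=
  exists2 A, A \in P & (x \in A) && (x' \in A).

(* C = C^Omega for some collection Omega: same blocks on every space. *)
Definition representable (M : MCat) (C : clustering_rule) : Prop :=
  exists Omega : FMS -> Prop,
    forall (X : FMS) (x x' : X), same_block (C X) x x' <-> omega_chain M Omega x x'.

From Stdlib Require Import Reals.
From mathcomp Require Import all_boot.

Set Implicit Arguments.
Unset Strict Implicit.
Unset Printing Implicit Defensive.

(* If C is excisive, take for Omega the spaces on which C is the one-block
   partition: every block of C(X) is such a space and its inclusion into X is
   a morphism, and conversely functoriality pushes the single block of an
   omega in Omega into a single block of C(X).  If C = C^Omega, a block B of
   C(X) is closed under Omega-steps, so every Omega-chain between points of B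
   stays in B and corestricts to a chain of the subspace B; hence C(B) has
   one block. *)

Section Partitions.

Variables (T : finType) (P : {set {set T}}).
Hypothesis partP : partition P [set: T].

Lemma same_blockE x y : same_block P x y <-> y \in pblock P x.
Proof.
have /and3P [/eqP cov tI _] := partP; split.
- by case=> A AP /andP [xA yA]; rewrite (def_pblock tI AP xA).
- move=> yb; exists (pblock P x); last by rewrite yb mem_pblock cov in_setT.
  by apply: pblock_mem; rewrite cov in_setT.
Qed.

Lemma same_block_refl x : same_block P x x.
Proof.
by apply/same_blockE; rewrite mem_pblock; case/and3P: partP => /eqP -> _ _.
Qed.

Lemma same_block_trans x y z :
  same_block P x y -> same_block P y z -> same_block P x z.
Proof.
move=> /same_blockE yx /same_blockE zy; apply/same_blockE.
have /and3P [/eqP cov tI _] := partP.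
have xc : x \in cover P by rewrite cov in_setT.
by rewrite -(def_pblock tI (pblock_mem xc) yx).
Qed.

Lemma same_block_mem B x y : B \in P -> x \in B -> same_block P x y -> y \in B.
Proof.
move=> BP xB /same_blockE; have /and3P [_ tI _] := partP.
by rewrite (def_pblock tI BP xB).
Qed.

Lemma partition_single_block (t : T) :
  (forall x y, same_block P x y) -> P = [set [set: T]].
Proof.
move=> Pall; have /and3P [/eqP cov _ n0] := partP.
have full A : A \in P -> A = [set: T].
  move=> AP; apply/setP => y; rewrite in_setT.
  have /set0Pn [a aA] : A != set0 by apply: contraNneq n0 => <-.
  exact: same_block_mem aA (Pall a y).
apply/setP => A; rewrite in_set1; apply/idP/eqP => [/full //|->].
have tc : t \in cover P by rewrite cov in_setT.
by rewrite -(full _ (pblock_mem tc)); apply: pblock_mem.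
Qed.

End Partitions.

Lemma same_block_set1T (T : finType) (x y : T) : same_block [set [set: T]] x y.
Proof. by exists [set: T]; rewrite ?in_set1 ?in_setT. Qed.

Lemma val_is_morphism (M : MCat) (X : FMS) (B : {set X}) :
  is_morphism M (fun x : subFMS B => val x).
Proof. by split=> [x x'|_]; [exact: Rle_refl | exact: val_inj]. Qed.

Definition one_block (C : clustering_rule) (w : FMS) : Prop :=
  forall a b : w, same_block (C w) a b.

Section ClusteringFunctor.

Variables (M : MCat) (C : clustering_rule).
Hypothesis CF : is_clustering_functor M C.

Lemma same_block_morphism (X Y : FMS) (f : X -> Y) (a b : X) :
  is_morphism M f -> same_block (C X) a b -> same_block (C Y) (f a) (f b).
Proof.
move=> fm [A AC /andP [aA bA]].
case: CF => _ Cref; case: (Cref _ _ f fm A AC) => B'.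
rewrite in_setD1 => /andP [_ /imsetP [B BC ->]] /subsetP AB.
by exists B => //; have := AB a aA; have := AB b bA; rewrite !inE => -> ->.
Qed.

Lemma omega_chain_one_block_same_block (X : FMS) (x y : X) :
  omega_chain M (one_block C) x y -> same_block (C X) x y.
Proof.
have partX := proj1 CF X.
elim=> [z | u v z [w [a [b [f [Ow [fm [<- <-]]]]]]] _ IH].
  exact: same_block_refl partX z.
exact: same_block_trans partX _ _ _ (same_block_morphism fm (Ow a b)) IH.
Qed.

Hypothesis Cexc : excisive C.

Lemma excisive_same_block_step (X : FMS) (x y : X) :
  same_block (C X) x y -> omega_step M (one_block C) x y.
Proof.
case=> A AC /andP [xA yA].
exists (subFMS A), (Sub x xA), (Sub y yA), (fun u => val u).
split; last by split; [exact: val_is_morphism | split].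
by move=> a b; rewrite (Cexc AC); exact: same_block_set1T.
Qed.

Lemma excisive_representable : representable M C.
Proof.
exists (one_block C) => X x y; split.
- by move/excisive_same_block_step/oc_step; apply; apply: oc_refl.
- exact: omega_chain_one_block_same_block.
Qed.

End ClusteringFunctor.

Section SubspaceChains.

Variables (M : MCat) (Omega : FMS -> Prop) (X : FMS) (B : {set X}).
Hypothesis B_step_closed :
  forall u v : X, u \in B -> omega_step M Omega u v -> v \in B.

Lemma omega_step_subspace (a : subFMS B) (z : X) :
  omega_step M Omega (val a) z ->
  exists2 b : subFMS B, val b = z & omega_step M Omega a b.
Proof.
case=> w [al [be [f [Ow [[fd fi] [fa fb]]]]]].
have fB c : f c \in B.
  apply: (B_step_closed (valP a)); rewrite -fa.
  by exists w, al, c, f.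
exists (Sub (f be) (fB be)) => //.
exists w, al, be, (fun c => Sub (f c) (fB c) : subFMS B).
split=> //; split; last by split=> //; apply: val_inj.
split=> [c c' | /fi finj c c' /(congr1 val) /finj //]; exact: fd.
Qed.

Lemma omega_chain_subspace (x z : X) :
  omega_chain M Omega x z -> forall a : subFMS B, val a = x ->
  exists2 b : subFMS B, val b = z & omega_chain M Omega a b.
Proof.
elim=> [y a ay | y y' z' st _ IH a ay]; first by exists a => //; apply: oc_refl.
rewrite -ay in st; have [a' a'y st'] := omega_step_subspace st.
have [b bz ch] := IH a' a'y.
by exists b => //; apply: oc_step st' ch.
Qed.

End SubspaceChains.

Lemma representable_excisive (M : MCat) (C : clustering_rule) :
  (forall X : FMS, partition (C X) [set: X]) ->
  representable M C -> excisive C.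
Proof.
move=> Cpart [Omega CE] X B BC.
have B_closed (u v : X) : u \in B -> omega_step M Omega u v -> v \in B.
  move=> uB st; apply: (same_block_mem (Cpart X) BC uB); apply/CE.
  exact: oc_step st (oc_refl _ _ _).
have /set0Pn [t tB] : B != set0.
  by have /and3P [_ _ n0] := Cpart X; apply: contraNneq n0 => <-.
apply: (partition_single_block (Cpart _) (Sub t tB : subFMS B)) => a b.
apply/CE; have /CE ch : same_block (C X) (val a) (val b).
  by exists B => //; apply/andP; split; apply: valP.
have [b' /val_inj <- //] := omega_chain_subspace B_closed ch erefl.
Qed.

Theorem mainTheorem3 (M : MCat) (C : clustering_rule) :
  is_clustering_functor M C -> (excisive C <-> representable M C).
Proof.
move=> CF; split; first exact: excisive_representable.
exact: representable_excisive (proj1 CF).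
Qed.
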